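(* If the starvation number of an SCS with $n$ robots is $s$, then the $s$-resilience of the system is $n-s$.
   Context: Let $T=\{C_1,\dots,C_n\}$ be pairwise disjoint unit circles in the plane (trajectories) and $\epsilon<0.5$ a communication range. The graph of potential links $G_\epsilon(T)$ has the circle centers as nodes and an edge $\{i,j\}$ whenever the centers of $C_i,C_j$ are at distance at most $2+\epsilon$; it is assumed connected. Points of a circle are identified with angles (modulo $2\pi$), and a robot traverses a circle in one time unit. A schedule is a pair $(f,g)$, $f:T\to[0,2\pi)$, $g:T\to\{-1,1\}$ ($1$ = counterclockwise); the robot on $C_i$ is at angle $f(C_i)+2\pi g(C_i)t$ at time $t$. A communication graph $G=(V,E)$ is a connected spanning subgraph of $G_\epsilon(T)$. The link position $\phi_{ij}$ is the point of $C_i$ closest to $C_j$. A schedule is $G$-synchronized if for every $\{i,j\}\in E$ the robot on $C_i$ is at $\phi_{ij}$ exactly when the robot on $C_j$ is at $\phi_{ji}$. An SCS with communication graph $G$ consists of $n$ robots, one per circle, moving under a $G$-synchronized schedule with $g(C_i)=-g(C_j)$ for all $\{i,j\}\in E$. Shifting protocol: when a robot on $C_i$ reaches $\phi_{ij}$ and there is no robot at $\phi_{ji}$, it moves to $C_j$ and thereafter follows the schedule of $C_j$. A partial SCS is obtained by removing some robots, the rest applying the shifting protocol. A surviving robot starves if every time it arrives at a link position the corresponding neighbor is absent. The $k$-resilience ($k\ge1$) is the minimum number of robots whose removal may cause at least $k$ surviving robots to starve ($\infty$ if impossible). The starvation number is the maximum possible number of starving robots in a partial SCS obtained from the SCS.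 *)

From mathcomp Require Import all_boot.
From Stdlib Require Import Reals.

Set Implicit Arguments.
Unset Strict Implicit.
Unset Printing Implicit Defensive.

Local Open Scope R_scope.

(* Data of a synchronized communication system (SCS) with n robots / circles.
   Circle C_i is the unit circle centred at (cx i, cy i).  The point of C_i
   with angle a is (cx i + cos a, cy i + sin a). *)
Record scs_data (n : nat) := SCSData {
  cx   : 'I_n -> R;
  cy   : 'I_n -> R;
  eps  : R;                  (* communication range *)
  comm : rel 'I_n;           (* edge relation of the communication graph G *)
  sf   : 'I_n -> R;          (* f(C_i) : starting angle *)
  sg   : 'I_n -> R           (* g(C_i) in {-1, 1}, 1 = counterclockwise *)
}.

Section Defs.
Variable n : nat.
Variable D : scs_data n.

Definition dist (i j : 'I_n) : R :=
  sqrt ((cx D j - cx D i) ^ 2 + (cy D j - cy D i) ^ 2).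

Definition circ_pt (i : 'I_n) (a : R) : R * R :=
  (cx D i + cos a, cy D i + sin a).

(* link position phi_ij : the point of C_i closest to C_j *)
Definition link (i j : 'I_n) : R * R :=
  (cx D i + (cx D j - cx D i) / dist i j, cy D i + (cy D j - cy D i) / dist i j).

Definition sched_pt (i : 'I_n) (t : R) : R * R :=
  circ_pt i (sf D i + 2 * PI * sg D i * t).

Definition potential_link (i j : 'I_n) : Prop := i <> j /\ dist i j <= 2 + eps D.

Definition is_SCS : Prop :=
  (forall i j : 'I_n, i <> j -> 2 < dist i j) /\
  0 < eps D < 1/2 /\
  (forall i j, comm D i j = comm D j i) /\
  (forall i, ~~ comm D i i) /\
  (forall i j, comm D i j -> potential_link i j) /\
  (forall i j, connect (comm D) i j) /\
  (forall i, 0 <= sf D i < 2 * PI) /\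
  (forall i, sg D i = 1 \/ sg D i = -1) /\
  (forall i j, comm D i j -> forall t : R,
      sched_pt i t = link i j <-> sched_pt j t = link j i) /\
  (forall i j, comm D i j -> sg D i = - sg D j).

(* ---- Partial SCS and the shifting protocol ----
   Robots are named by the circle they start on.  [S] is the set of removed
   robots; the surviving robots are those not in [S].  An execution
   [pos : 'I_n -> R -> 'I_n] gives, for each robot r and time t >= 0, the
   circle the robot is on at time t (after the shifts happening at time t);
   on circle i the robot follows the schedule of C_i, i.e. it is at
   [sched_pt i t]. *)

Definition alive (S : {set 'I_n}) (r : 'I_n) : Prop := r \notin S.

Definition before (pos : 'I_n -> R -> 'I_n) (r : 'I_n) (t : R) (c : 'I_n) : Prop :=
  (t = 0 /\ c = r) \/
  (0 < t /\ exists d, 0 < d /\ forall t', t - d < t' < t -> pos r t' = c).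

Definition shift_cond (S : {set 'I_n}) (b : 'I_n -> 'I_n) (r : 'I_n) (t : R)
    (j : 'I_n) : Prop :=
  comm D (b r) j /\ sched_pt (b r) t = link (b r) j /\
  ~ (exists r', alive S r' /\ r' <> r /\ b r' = j /\ sched_pt j t = link j (b r)).

Definition step (S : {set 'I_n}) (b : 'I_n -> 'I_n) (r : 'I_n) (t : R)
    (c : 'I_n) : Prop :=
  (exists j, shift_cond S b r t j /\ c = j) \/
  ((forall j, ~ shift_cond S b r t j) /\ c = b r).

Definition execution (S : {set 'I_n}) (pos : 'I_n -> R -> 'I_n) : Prop :=
  (forall r, alive S r -> forall t, 0 <= t ->
     exists d, 0 < d /\ forall t', t <= t' < t + d -> pos r t' = pos r t) /\
  (forall t, 0 <= t -> exists b : 'I_n -> 'I_n,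
     (forall r, alive S r -> before pos r t (b r)) /\
     (forall r, alive S r -> step S b r t (pos r t))).

Definition starves (S : {set 'I_n}) (pos : 'I_n -> R -> 'I_n) (r : 'I_n) : Prop :=
  alive S r /\
  forall t, 0 <= t -> forall (i j r' : 'I_n),
    before pos r t i -> comm D i j -> sched_pt i t = link i j ->
    alive S r' -> r' <> r -> before pos r' t j -> sched_pt j t <> link j i.

Definition is_starvation_number (s : nat) : Prop :=
  (exists (S : {set 'I_n}) pos (K : {set 'I_n}),
     execution S pos /\ (#|K| = s)%nat /\ (forall r, r \in K -> starves S pos r)) /\
  (forall (S : {set 'I_n}) pos (K : {set 'I_n}),
     execution S pos -> (forall r, r \in K -> starves S pos r) -> (#|K| <= s)%nat).

Definition is_resilience (k m : nat) : Prop :=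
  (exists (S : {set 'I_n}) pos (K : {set 'I_n}),
     (#|S| = m)%nat /\ execution S pos /\ (k <= #|K|)%nat /\
     (forall r, r \in K -> starves S pos r)) /\
  (forall (S : {set 'I_n}) pos (K : {set 'I_n}),
     execution S pos -> (k <= #|K|)%nat -> (forall r, r \in K -> starves S pos r) ->
     (m <= #|S|)%nat).

End Defs.

(* Let K be a set of at least s starving robots of a partial SCS, and suppose
   some surviving robot v is not in K.  Remove every robot except those of K
   and v, and let v follow the token path that shifts at every link position it
   reaches.  In the original system the circle of the token is occupied at all
   times: a robot reaching a link position either shifts along it, or faces a
   robot that then cannot shift either.  So every robot of the new system is
   shadowed by one of the original system, the robots of K still starve, and v
   starves too, because meeting a robot of K would make that robot meet v's
   shadow.  This gives |K| + 1 > s starving robots, a contradiction.  Hence the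
   removed robots are exactly the complement of K, so at least n - s robots
   must be removed, and the witness of the starvation number removes n - s. *)

From Pilot Require Import Defs.
From mathcomp Require Import all_boot.
From Stdlib Require Import Reals Lra Lia Classical ClassicalEpsilon.

Set Implicit Arguments.
Unset Strict Implicit.
Unset Printing Implicit Defensive.

Local Open Scope R_scope.

Lemma cos_sin_inj_2PI x y :
  cos x = cos y -> sin x = sin y -> exists k : Z, x - y = 2 * IZR k * PI.
Proof.
move=> Ec Es.
have cos_diff : cos (x - y) = 1.
  by rewrite cos_minus Ec Es; have := sin2_cos2 y; rewrite /Rsqr; lra.
have sin_half : sin ((x - y) / 2) = 0.
  have := cos_2a_sin ((x - y) / 2).
  rewrite (_ : 2 * ((x - y) / 2) = x - y); [rewrite cos_diff; nra | field].
have [k Hk] := @sin_eq_0_0 _ sin_half.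
by exists k; lra.
Qed.

Lemma dist_same_direction a b a' b' :
  0 < sqrt (a ^ 2 + b ^ 2) -> 0 < sqrt (a' ^ 2 + b' ^ 2) ->
  a / sqrt (a ^ 2 + b ^ 2) = a' / sqrt (a' ^ 2 + b' ^ 2) ->
  b / sqrt (a ^ 2 + b ^ 2) = b' / sqrt (a' ^ 2 + b' ^ 2) ->
  sqrt ((a' - a) ^ 2 + (b' - b) ^ 2) =
  Rabs (sqrt (a' ^ 2 + b' ^ 2) - sqrt (a ^ 2 + b ^ 2)).
Proof.
set d := sqrt (a ^ 2 + b ^ 2); set d' := sqrt (a' ^ 2 + b' ^ 2) => d_gt0 d'_gt0 Ea Eb.
have d_sq : d ^ 2 = a ^ 2 + b ^ 2 by rewrite /d pow2_sqrt; nra.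
have -> : a' = a * d' / d.
  rewrite (_ : a * d' / d = a / d * d'); last by field; lra.
  by rewrite Ea; field; lra.
have -> : b' = b * d' / d.
  rewrite (_ : b * d' / d = b / d * d'); last by field; lra.
  by rewrite Eb; field; lra.
rewrite (_ : _ + _ = Rsqr (d' - d)) ?sqrt_Rsqr_abs //.
rewrite /Rsqr; apply: (Rmult_eq_reg_r (d ^ 2)); last by nra.
have -> : (a * d' / d - a) ^ 2 + (b * d' / d - b) ^ 2 =
          (a ^ 2 + b ^ 2) * (d' - d) ^ 2 / d ^ 2 by field; lra.
by rewrite -d_sq; field; lra.
Qed.

Lemma continuous_induction (a b : R) (P : R -> Prop) :
  (forall t, a <= t < b -> (forall u, a <= u < t -> P u) -> P t) ->
  (forall t, a <= t < b -> P t ->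
     exists d, 0 < d /\ forall u, t <= u < t + d -> P u) ->
  forall t, a <= t < b -> P t.
Proof.
move=> P_left P_right t0 Ht0; apply: NNPP => notP.
pose E x := a <= x <= t0 /\ forall u, a <= u < x -> P u.
have E_bound : bound E by exists t0 => x [[_ ?] _].
have E_a : E a by split; [lra | move=> u; lra].
have [m [m_ub m_lub]] := @completeness E E_bound (ex_intro _ a E_a).
have am : a <= m by apply: m_ub.
have mt0 : m <= t0 by apply: m_lub => x [[_ ?] _].
have below_m : forall u, a <= u < m -> P u.
  move=> u Hu; apply: NNPP => notPu.
  suff : m <= u by lra.
  apply: m_lub => x [_ Px]; apply: Rnot_lt_le => ux; apply: notPu; apply: Px; lra.
have Pm : P m by apply: P_left; [lra | exact: below_m].
have [m_t0 | m_ne_t0] := Req_dec m t0; first by apply: notP; rewrite -m_t0.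
have [d [d_gt0 Pd]] := P_right m ltac:(lra) Pm.
have : E (Rmin (m + d / 2) t0).
  split; first by split; [apply: Rmin_glb; lra | apply: Rmin_r].
  move=> u Hu; have [um | mu] := Rlt_le_dec u m; first by apply: below_m; lra.
  by apply: Pd; have := Rmin_l (m + d / 2) t0; lra.
move/m_ub; have : m < Rmin (m + d / 2) t0 by apply: Rmin_glb_lt; lra.
lra.
Qed.

Lemma before_left_point n (pos : 'I_n -> R -> 'I_n) r t c t0 :
  0 < t -> t0 < t -> before pos r t c -> exists u, t0 < u < t /\ pos r u = c.
Proof.
move=> t_gt0 t0_lt [[t0' _] | [_ [d [d_gt0 pos_c]]]]; first lra.
set u := Rmax (t - d / 2) ((t0 + t) / 2).
have u_lt : u < t by apply: Rmax_lub_lt; lra.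
have := Rmax_l (t - d / 2) ((t0 + t) / 2); have := Rmax_r (t - d / 2) ((t0 + t) / 2).
rewrite -/u => ? ?; exists u; split; [lra | apply: pos_c; lra].
Qed.

Lemma before_uniq n (pos : 'I_n -> R -> 'I_n) r t c1 c2 :
  before pos r t c1 -> before pos r t c2 -> c1 = c2.
Proof.
move=> before1 [[t0 ->] | [t_gt0 [d [d_gt0 pos_c2]]]].
  by case: before1 => [[_ ->] | [t_gt0 _]] //; lra.
have [u [Hu <-]] := before_left_point t_gt0 (t0 := t - d) ltac:(lra) before1.
by apply: pos_c2; lra.
Qed.

Lemma before_ext n (pos pos' : 'I_n -> R -> 'I_n) r t c :
  pos r =1 pos' r -> before pos r t c <-> before pos' r t c.
Proof.
suff imp : forall p p' : 'I_n -> R -> 'I_n, p r =1 p' r -> before p r t c -> before p' r t c.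
  by move=> E; split; apply: imp => // u; rewrite E.
move=> p p' E [? | [t_gt0 [d [d_gt0 p_c]]]]; first by left.
by right; split=> //; exists d; split=> // u Hu; rewrite -E p_c.
Qed.

Section SCSGeometry.
Variables (n : nat) (D : scs_data n).
Hypothesis HS : is_SCS D.

Lemma comm_sym i j : comm D i j -> comm D j i.
Proof. by case: HS => _ [_ [comm_symmetric _]]; rewrite comm_symmetric. Qed.

Lemma comm_neq i j : comm D i j -> i <> j.
Proof.
case: HS => _ [_ [_ [comm_irrefl _]]] cij eij.
by move: (comm_irrefl i); rewrite {2}eij cij.
Qed.

(* Equal link positions put [j] and [j'] on one ray from [c], at distances in
   [(2, 2 + 1/2]], hence closer than the disjointness of the circles allows. *)
Lemma link_inj c j j' : comm D c j -> comm D c j' -> link D c j = link D c j' -> j = j'.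
Proof.
move=> cj cj' [Ex Ey]; apply: NNPP => jj'.
case: HS => disjoint [eps_bd [_ [_ [potential _]]]].
have [_ dj] := potential c j cj; have [_ dj'] := potential c j' cj'.
have := disjoint c j (comm_neq cj); have := disjoint c j' (comm_neq cj').
have := disjoint j j' jj'; move: dj dj' Ex Ey; rewrite /link /Defs.dist.
rewrite (_ : cx D j' - cx D j = (cx D j' - cx D c) - (cx D j - cx D c)); last ring.
rewrite (_ : cy D j' - cy D j = (cy D j' - cy D c) - (cy D j - cy D c)); last ring.
move=> dj dj' Ex Ey djj' dcj' dcj.
by move: djj'; rewrite dist_same_direction; try lra; split_Rabs; lra.
Qed.

Lemma sched_pt_revisit c t1 t2 :
  sched_pt D c t1 = sched_pt D c t2 -> t1 < t2 -> t1 + 1 <= t2.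
Proof.
rewrite /sched_pt /circ_pt => -[Ec Es] t12.
have [k Hk] := cos_sin_inj_2PI (Rplus_eq_reg_l _ _ _ Ec) (Rplus_eq_reg_l _ _ _ Es).
have Ek : sg D c * (t1 - t2) = IZR k.
  by apply: (Rmult_eq_reg_l (2 * PI)); [lra | have := PI_RGT_0; lra].
apply: Rnot_lt_le => t21.
have sg_pm : sg D c = 1 \/ sg D c = -1 by case: HS => _ [_ [_ [_ [_ [_ [_ [? _]]]]]]].
case: sg_pm => sg_c; rewrite sg_c in Ek.
- have /lt_IZR ? : IZR k < 0 by lra.
  have /lt_IZR ? : -1 < IZR k by lra.
  lia.
- have /lt_IZR ? : 0 < IZR k by lra.
  have /lt_IZR ? : IZR k < 1 by lra.
  lia.
Qed.

End SCSGeometry.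

Lemma earliest_event (A : finType) (E : A -> R -> Prop) :
  (forall j s1 s2, E j s1 -> E j s2 -> s1 = s2) ->
  (exists j s, E j s) -> exists j s, E j s /\ forall j' s', E j' s' -> s <= s'.
Proof.
move=> E_uniq.
have min_j : forall j s s', E j s -> E j s' -> s <= s'.
  by move=> j s s' Es Es'; rewrite (E_uniq _ _ _ Es Es'); apply: Rle_refl.
suff min_in : forall l : seq A, (exists j s, j \in l /\ E j s) ->
    exists j s, E j s /\ forall j' s', j' \in l -> E j' s' -> s <= s'.
  move=> [j [s Ejs]]; have [|j0 [s0 [E0 min0]]] := min_in (enum A).
    by exists j, s; rewrite mem_enum.
  by exists j0, s0; split=> // j' s'; apply: min0; rewrite mem_enum.
elim=> [|j0 l IH] [j [s [jl Ejs]]] //.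
have [[j1 [s1 [j1l E1]]] | none_l] := classic (exists j s, j \in l /\ E j s).
- have [j2 [s2 [E2 min2]]] := IH (ex_intro _ j1 (ex_intro _ s1 (conj j1l E1))).
  have [[s0 E0] | none0] := classic (exists s0, E j0 s0); last first.
    exists j2, s2; split=> // j' s'; rewrite in_cons => /orP [/eqP -> E' | j'l E'].
      by case: none0; exists s'.
    exact: min2 j'l E'.
  have [s02 | s20] := Rle_lt_dec s0 s2.
  + exists j0, s0; split=> // j' s'; rewrite in_cons => /orP [/eqP -> | j'l E'].
      exact: min_j.
    by have := min2 _ _ j'l E'; lra.
  + exists j2, s2; split=> // j' s'; rewrite in_cons => /orP [/eqP -> E' | j'l E'].
      by have := min_j _ _ _ E0 E'; lra.
    exact: min2 j'l E'.
- have jj0 : j = j0.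
    by move: jl; rewrite in_cons => /orP [/eqP // | jl]; case: none_l; exists j, s.
  subst j; exists j0, s; split=> // j' s'; rewrite in_cons => /orP [/eqP -> | j'l E'].
    exact: min_j.
  by case: none_l; exists j', s'.
Qed.

Section Links.
Variables (n : nat) (D : scs_data n).

Definition at_link (c j : 'I_n) (t : R) : Prop :=
  comm D c j /\ sched_pt D c t = link D c j.

Definition arrives (c : 'I_n) (t : R) : Prop := exists j, at_link c j t.

Lemma shift_cond_unopposed S b r t j :
  (forall r', alive S r' -> r' <> r -> b r' = j -> at_link (b r) j t ->
     sched_pt D j t <> link D j (b r)) ->
  shift_cond D S b r t j <-> at_link (b r) j t.
Proof.
move=> unopposed; split=> [[cj [lj _]] | [cj lj]]; first by [].
split=> //; split=> // [[r' [r'_alive [r'r [br' lj']]]]].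
exact: (unopposed r' r'_alive r'r br' (conj cj lj) lj').
Qed.

End Links.

Section TokenPath.
Variables (n : nat) (D : scs_data n).
Hypothesis HS : is_SCS D.

(* The circle [j] occupied just after time [t] by a robot that was on [c] just
   before [t] and always shifts when it reaches a link position. *)
Definition token_move (c : 'I_n) (t : R) (j : 'I_n) : Prop :=
  at_link D c j t \/ (j = c /\ ~ arrives D c t).

(* When [c] has no link position in [(t, t + 1]], the token waits one period. *)
Definition next_event (c : 'I_n) (t : R) (j : 'I_n) (s : R) : Prop :=
  [/\ t < s, forall u, t < u < s -> ~ arrives D c u, token_move c s j
    & arrives D c s \/ s = t + 1].

Lemma exists_next_event c t : exists e : 'I_n * R, next_event c t e.1 e.2.
Proof.
pose E j s := at_link D c j s /\ t < s <= t + 1.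
have E_uniq : forall j s1 s2, E j s1 -> E j s2 -> s1 = s2.
  move=> j s1 s2 [[_ l1] b1] [[_ l2] b2].
  have [s12 | [// | s21]] := Rtotal_order s1 s2.
  - by have := sched_pt_revisit HS (etrans l1 (esym l2)) s12; lra.
  - by have := sched_pt_revisit HS (etrans l2 (esym l1)) s21; lra.
have [arrival | no_arrival] := classic (exists j s, E j s).
- have [j [s [[arr [ts st]] earliest]]] := earliest_event E_uniq arrival.
  exists (j, s); split=> //=; [|by left| by left; exists j].
  move=> u tus [j' arr']; have u_range : t < u <= t + 1 by lra.
  by have := earliest j' u (conj arr' u_range); lra.
- have no_arr : forall u, t < u <= t + 1 -> ~ arrives D c u.
    by move=> u tu [j arr]; apply: no_arrival; exists j, u.
  exists (c, t + 1); split=> /=; [lra | | | by right].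
  + by move=> u tu; apply: no_arr; lra.
  + by right; split=> //; apply: no_arr; lra.
Qed.

Lemma exists_token_move c t : exists j, token_move c t j.
Proof.
have [[j arr] | no_arr] := classic (arrives D c t); first by exists j; left.
by exists c; right.
Qed.

Definition next_event_of (c : 'I_n) (t : R) : 'I_n * R :=
  proj1_sig (constructive_indefinite_description _ (exists_next_event c t)).

Variable v : 'I_n.

Definition first_circle : 'I_n :=
  proj1_sig (constructive_indefinite_description _ (exists_token_move v 0)).

Fixpoint token_event (k : nat) : 'I_n * R :=
  if k is k'.+1 then next_event_of (token_event k').1 (token_event k').2
  else (first_circle, 0).

Definition token_circle k := (token_event k).1.
Definition token_time k := (token_event k).2.

Lemma token_time0 : token_time 0 = 0.
Proof. by []. Qed.

Lemma token_move0 : token_move v 0 (token_circle 0).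
Proof. exact: proj2_sig (constructive_indefinite_description _ (exists_token_move v 0)). Qed.

Lemma token_event_next k :
  next_event (token_circle k) (token_time k) (token_circle k.+1) (token_time k.+1).
Proof. exact: proj2_sig (constructive_indefinite_description _ (exists_next_event _ _)). Qed.

Lemma token_time_lt k : token_time k < token_time k.+1.
Proof. by case: (token_event_next k). Qed.

Lemma token_time_le (k m : nat) : (k <= m)%nat -> token_time k <= token_time m.
Proof.
move: k m; apply: homo_leq => [x | y x z | k]; first exact: Rle_refl.
  exact: Rle_trans.
exact/Rlt_le/token_time_lt.
Qed.

Lemma token_time_ge0 k : 0 <= token_time k.
Proof. by rewrite -token_time0; apply: token_time_le. Qed.

Lemma token_time_gap a b : (a < b)%nat ->
  token_circle a = token_circle b -> token_circle a.+1 = token_circle b.+1 ->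
  token_time a.+1 + 1 <= token_time b.+1.
Proof.
move=> ab Ec Ej.
have [_ _ move_a _] := token_event_next a.
have [_ _ move_b [arr_b | ->]] := token_event_next b.
- have [[cb lb] | [_ /(_ arr_b) []]] := move_b.
  have [[_ la] | [Ea _]] := move_a; last first.
    by case: (comm_neq HS cb); rewrite -Ec -Ej.
  apply: (@sched_pt_revisit _ _ HS (token_circle a)).
    by rewrite la Ec Ej lb.
  by have := token_time_le ab; have := token_time_lt b; lra.
- have : token_time a.+1 <= token_time b by apply: token_time_le.
  lra.
Qed.

(* Among [n * n + 1] consecutive events two would cross the same link, whose
   position is revisited only after a full period. *)
Lemma token_time_window k : token_time k + 1 <= token_time (k + (n * n).+1).
Proof.
apply: Rnot_lt_le => short.
pose f (i : 'I_(n * n).+1) := (token_circle (k + i), token_circle (k + i).+1).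
have no_repeat : forall a b : 'I_(n * n).+1, (a < b)%nat -> f a <> f b.
  move=> a b ab [Ec Ej].
  have kab : (k + a < k + b)%nat by rewrite ltn_add2l.
  have := token_time_gap kab Ec Ej.
  have : token_time k <= token_time (k + a).+1.
    by apply: token_time_le; rewrite -addnS leq_addr.
  have : token_time (k + b).+1 <= token_time (k + (n * n).+1).
    by apply: token_time_le; rewrite -addnS leq_add2l.
  lra.
have f_inj : injective f.
  move=> a b fab; apply/val_inj/eqP.
  by case: (ltngtP a b) => // [ab | ba]; [case: (no_repeat _ _ ab) | case: (no_repeat _ _ ba)].
by have := leq_card f f_inj; rewrite card_ord card_prod card_ord ltnn.
Qed.

Lemma token_time_unbounded t : exists k, t < token_time k.
Proof.
have [m tm] := INR_unbounded t.
exists (m * (n * n).+1)%nat; suff : INR m <= token_time (m * (n * n).+1) by lra.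
elim: m {tm} => [|m IH]; first exact: token_time_ge0.
rewrite S_INR mulSn addnC; have := token_time_window (m * (n * n).+1); lra.
Qed.

Lemma token_index_exists t : 0 <= t -> exists k, token_time k <= t < token_time k.+1.
Proof.
move=> t_ge0; have [m tm] := token_time_unbounded t.
elim: m tm => [|m IH] tm; first by rewrite token_time0 in tm; lra.
by have [/IH // | mt] := Rlt_le_dec t (token_time m); exists m.
Qed.

Lemma token_index_exists_left t : 0 < t -> exists k, token_time k < t <= token_time k.+1.
Proof.
move=> t_gt0; have [[|k] [k1 k2]] := token_index_exists (Rlt_le _ _ t_gt0).
  by exists 0%nat; rewrite token_time0 in k1 *; lra.
have [kt | kt] := Rle_lt_or_eq_dec _ _ k1; first by exists k.+1; lra.
by exists k; have := token_time_lt k; lra.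
Qed.

Lemma token_index_uniq k m t : token_time k <= t < token_time k.+1 ->
  token_time m <= t < token_time m.+1 -> k = m.
Proof.
move=> tk tm; case: (ltngtP k m) => // [km | mk].
- by have := token_time_le km; lra.
- by have := token_time_le mk; lra.
Qed.

Definition token_at (t : R) : 'I_n :=
  token_circle (epsilon (inhabits 0%nat) (fun k => token_time k <= t < token_time k.+1)).

Lemma token_at_on k t : token_time k <= t < token_time k.+1 -> token_at t = token_circle k.
Proof.
move=> tk; rewrite /token_at; congr token_circle; apply: (token_index_uniq _ tk).
by apply: (epsilon_spec _ (fun k => token_time k <= t < token_time k.+1)); exists k.
Qed.

Lemma token_at_rcont t : 0 <= t ->
  exists d, 0 < d /\ forall u, t <= u < t + d -> token_at u = token_at t.
Proof.
move=> t_ge0; have [k tk] := token_index_exists t_ge0.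
exists (token_time k.+1 - t); split; first lra.
by move=> u tu; rewrite !(@token_at_on k) //; lra.
Qed.

Lemma before_token_at t c : before (fun=> token_at) v t c ->
  (t = 0 /\ c = v) \/ exists k, token_time k < t <= token_time k.+1 /\ c = token_circle k.
Proof.
move=> bef; have [[t0 cv] | [t_gt0 _]] := bef; first by left.
right; have [k tk] := token_index_exists_left t_gt0; exists k; split=> //.
have [u [tu <-]] := before_left_point t_gt0 (proj1 tk) bef.
by apply: token_at_on; lra.
Qed.

Lemma exists_before_token_at t : 0 <= t -> exists c, before (fun=> token_at) v t c.
Proof.
move=> /Rle_lt_or_eq_dec [t_gt0 | <-]; last by exists v; left.
have [k tk] := token_index_exists_left t_gt0; exists (token_circle k); right.
split=> //; exists (t - token_time k); split=> [|u tu]; first lra.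
by apply: token_at_on; lra.
Qed.

Lemma token_at_move t c : before (fun=> token_at) v t c -> token_move c t (token_at t).
Proof.
case/before_token_at => [[-> ->] | [k [tk ->]]].
  rewrite (@token_at_on 0); first exact: token_move0.
  by have := token_time_lt 0; rewrite token_time0; lra.
have [_ no_arr move_k _] := token_event_next k.
have [tk1 | ->] := Rle_lt_or_eq_dec _ _ (proj2 tk).
  by rewrite (@token_at_on k); [right; split=> //; apply: no_arr |]; lra.
by rewrite (@token_at_on k.+1) //; have := token_time_lt k.+1; lra.
Qed.

End TokenPath.

Section Occupancy.
Variables (n : nat) (D : scs_data n).
Hypothesis HS : is_SCS D.
Variables (S : {set 'I_n}) (pos : 'I_n -> R -> 'I_n).

Lemma starves_no_meeting r w t i j :
  starves D S pos r -> alive S w -> 0 <= t -> before pos r t i -> before pos w t j ->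
  at_link D i j t -> sched_pt D j t = link D j i -> False.
Proof.
move=> [_ r_starves] w_alive t_ge0 r_i w_j [cij lij] lji.
have wr : w <> r by move=> wr; subst w; apply: (comm_neq HS cij); exact: before_uniq r_i w_j.
exact: r_starves t t_ge0 i j w r_i cij lij w_alive wr w_j lji.
Qed.

Hypothesis exec : execution D S pos.

Lemma execution_at t : 0 <= t -> exists b : 'I_n -> 'I_n,
  (forall r, alive S r -> before pos r t (b r)) /\
  (forall r, alive S r -> step D S b r t (pos r t)).
Proof. by case: exec => _; apply. Qed.

Lemma no_arrival_stays w t c :
  0 <= t -> alive S w -> before pos w t c -> ~ arrives D c t -> pos w t = c.
Proof.
move=> t_ge0 w_alive w_c no_arr; have [b [b_before b_step]] := execution_at t_ge0.
have bw := before_uniq (b_before w w_alive) w_c.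
case: (b_step w w_alive) => [[j [[cj [lj _]] _]] | [_ ->]] //.
by case: no_arr; exists j; rewrite -bw.
Qed.

(* If the robot on [c] does not shift, it is because a robot faces it on [j];
   that robot cannot shift either, its only link position at time [t] being
   the one facing [c]. *)
Lemma token_move_occupied w t c j : 0 <= t -> alive S w -> before pos w t c ->
  token_move D c t j -> exists w', alive S w' /\ pos w' t = j.
Proof.
move=> t_ge0 w_alive w_c [[cj lj] | [-> no_arr]]; last first.
  by exists w; split=> //; apply: no_arrival_stays.
have [b [b_before b_step]] := execution_at t_ge0.
have bw := before_uniq (b_before w w_alive) w_c.
case: (b_step w w_alive) => [[j' [[cj' [lj' _]] wj']] | [no_shift _]].
  exists w; split=> //; rewrite wj'; rewrite bw in cj' lj'.
  by apply: (link_inj HS cj' cj); rewrite -lj' lj.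
have [r' [r'_alive [r'w [br' lr']]]] : exists r', alive S r' /\ r' <> w /\
    b r' = j /\ sched_pt D j t = link D j c.
  by apply: NNPP => none; apply: (no_shift j); rewrite /shift_cond bw.
exists r'; split=> //.
case: (b_step r' r'_alive) => [[j'' [[cj'' [lj'' unopposed]] _]] | [_ ->]] //.
rewrite br' in cj'' lj'' unopposed.
have j''c : j'' = c by apply: (link_inj HS cj'' (comm_sym HS cj)); rewrite -lj'' lr'.
case: unopposed; exists w; rewrite bw j''c.
by split=> //; split=> // wr'; apply: r'w.
Qed.

Lemma circle_kept w t0 t1 c : 0 <= t0 -> alive S w -> pos w t0 = c ->
  (forall u, t0 < u < t1 -> ~ arrives D c u) -> forall t, t0 <= t < t1 -> pos w t = c.
Proof.
move=> t0_ge0 w_alive w_t0 no_arr; apply: continuous_induction.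
- move=> t [t0t tt1] IH; have [t0_lt | <-] := Rle_lt_or_eq_dec _ _ t0t; last done.
  have t_gt0 : 0 < t by lra.
  have [b [b_before _]] := execution_at (Rlt_le _ _ t_gt0).
  have bw : b w = c.
    have [u [tu <-]] := before_left_point t_gt0 t0_lt (b_before w w_alive).
    by apply: IH; lra.
  apply: no_arrival_stays; [lra | exact: w_alive | | apply: no_arr; lra].
  by rewrite -bw; apply: b_before.
- move=> t [t0t _] wt; case: exec => rcont _.
  have [d [d_gt0 Hd]] := rcont w w_alive t ltac:(lra).
  by exists d; split=> // u Hu; rewrite Hd.
Qed.

Variable v : 'I_n.
Hypothesis v_alive : alive S v.

Lemma token_occupied_event k :
  exists w, alive S w /\ pos w (token_time HS v k) = token_circle HS v k.
Proof.
elim: k => [|k [w [w_alive w_k]]].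
  by apply: (token_move_occupied (Rle_refl 0) v_alive _ (token_move0 HS v)); left.
have [tk no_arr move_k _] := token_event_next HS v k.
have k_ge0 := token_time_ge0 HS v k.
apply: (token_move_occupied _ w_alive _ move_k); first lra.
right; split; first lra.
exists (token_time HS v k.+1 - token_time HS v k); split=> [|u Hu]; first lra.
by apply: (circle_kept k_ge0 w_alive w_k no_arr); lra.
Qed.

Lemma token_occupied t c : before (fun=> token_at HS v) v t c ->
  exists w, alive S w /\ before pos w t c.
Proof.
case/before_token_at => [[-> ->] | [k [tk ->]]]; first by exists v; split=> //; left.
have [w [w_alive w_k]] := token_occupied_event k.
have k_ge0 := token_time_ge0 HS v k.
have [_ no_arr _ _] := token_event_next HS v k.
exists w; split=> //; right; split; first lra.
exists (t - token_time HS v k); split=> [|u Hu]; first lra.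
by apply: (circle_kept k_ge0 w_alive w_k no_arr); lra.
Qed.

End Occupancy.

Section Extension.
Variables (n : nat) (D : scs_data n).
Hypothesis HS : is_SCS D.
Variables (S : {set 'I_n}) (pos : 'I_n -> R -> 'I_n) (K : {set 'I_n}) (v : 'I_n).
Hypotheses (exec : execution D S pos) (K_starve : forall r, r \in K -> starves D S pos r).
Hypothesis v_alive : alive S v.

Definition ext_removed : {set 'I_n} := ~: (v |: K).

Definition ext_pos (r : 'I_n) : R -> 'I_n := if r == v then token_at HS v else pos r.

Lemma ext_alive r : alive ext_removed r <-> r \in v |: K.
Proof. by rewrite /alive /ext_removed in_setC negbK. Qed.

Lemma ext_alive_K r : alive ext_removed r -> r != v -> r \in K.
Proof. by move/ext_alive; rewrite in_setU1 => /orP [/eqP -> | //]; rewrite eqxx. Qed.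

Lemma K_alive r : r \in K -> alive S r.
Proof. by case/K_starve. Qed.

Lemma before_ext_pos_v t c :
  before ext_pos v t c <-> before (fun=> token_at HS v) v t c.
Proof. by apply: before_ext => u; rewrite /ext_pos eqxx. Qed.

Lemma before_ext_pos r t c : r != v -> before ext_pos r t c <-> before pos r t c.
Proof. by move=> rv; apply: before_ext => u; rewrite /ext_pos (negbTE rv). Qed.

Lemma ext_shadow t r c : alive ext_removed r -> before ext_pos r t c ->
  exists w, alive S w /\ before pos w t c.
Proof.
move=> r_alive; have [-> /before_ext_pos_v | rv /(before_ext_pos _ _ rv) r_c] := eqVneq r v.
  exact: token_occupied.
by exists r; split=> //; apply/K_alive/ext_alive_K.
Qed.

(* Of two distinct robots of the new system at least one is in [K], and the
   other one is shadowed by a robot of the original system. *)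
Lemma ext_no_meeting t r r' i j : 0 <= t ->
  alive ext_removed r -> alive ext_removed r' -> r' <> r ->
  before ext_pos r t i -> before ext_pos r' t j ->
  at_link D i j t -> sched_pt D j t = link D j i -> False.
Proof.
move=> t_ge0 r_alive r'_alive r'r r_i r'_j [cij lij] lji.
have [rv | rv] := eqVneq r v.
- subst r; have r'v : r' != v by apply/eqP.
  have [w [w_alive w_i]] := ext_shadow r_alive r_i.
  exact: (starves_no_meeting HS (K_starve (ext_alive_K r'_alive r'v)) w_alive t_ge0
            ((before_ext_pos _ _ r'v).1 r'_j) w_i (conj (comm_sym HS cij) lji) lij).
- have [w [w_alive w_j]] := ext_shadow r'_alive r'_j.
  exact: (starves_no_meeting HS (K_starve (ext_alive_K r_alive rv)) w_alive t_ge0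
            ((before_ext_pos _ _ rv).1 r_i) w_j (conj cij lij) lji).
Qed.

Lemma ext_starves r : r \in v |: K -> starves D ext_removed ext_pos r.
Proof.
move=> /ext_alive r_alive; split=> // t t_ge0 i j r' r_i cij lij r'_alive r'r r'_j lji.
exact: (ext_no_meeting t_ge0 r_alive r'_alive r'r r_i r'_j (conj cij lij) lji).
Qed.

Lemma ext_execution : execution D ext_removed ext_pos.
Proof.
split=> [r r_alive t t_ge0 | t t_ge0].
  rewrite /ext_pos; case: eqP => [_ | /eqP rv]; first exact: token_at_rcont.
  by case: exec => rcont _; apply: rcont t_ge0; apply/K_alive/ext_alive_K.
have [b [b_before b_step]] := execution_at exec t_ge0.
have [cv cv_before] := exists_before_token_at HS v t_ge0.
pose b' r := if r == v then cv else b r.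
have b'_before : forall r, alive ext_removed r -> before ext_pos r t (b' r).
  move=> r r_alive; rewrite /b'; case: eqP => [-> | /eqP rv]; first exact/before_ext_pos_v.
  exact/(before_ext_pos _ _ rv)/b_before/K_alive/ext_alive_K.
exists b'; split=> // r r_alive.
have shift_iff : forall j, shift_cond D ext_removed b' r t j <-> at_link D (b' r) j t.
  move=> j; apply: shift_cond_unopposed => r' r'_alive r'r <- ij lji.
  exact: (ext_no_meeting t_ge0 r_alive r'_alive r'r (b'_before r r_alive)
            (b'_before r' r'_alive) ij lji).
have [rv | rv] := eqVneq r v.
  subst r; have b'v : b' v = cv by rewrite /b' eqxx.
  rewrite /ext_pos eqxx; case: (token_at_move cv_before) => [ij | [-> no_arr]].
    by left; exists (token_at HS v t); split=> //; apply/shift_iff; rewrite b'v.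
  right; split=> // j /shift_iff; rewrite b'v => ij.
  by apply: no_arr; exists j.
have b'r : b' r = b r by rewrite /b' (negbTE rv).
have r_K := ext_alive_K r_alive rv; have r_S := K_alive r_K.
have shift_S : forall j, shift_cond D S b r t j <-> at_link D (b r) j t.
  move=> j; apply: shift_cond_unopposed => r' r'_alive r'r br' ij.
  apply: (starves_no_meeting HS (K_starve r_K) r'_alive t_ge0 (b_before r r_S) _ ij).
  by rewrite -br'; apply: b_before.
rewrite /ext_pos (negbTE rv); case: (b_step r r_S) => [[j [/shift_S ij ->]] | [no_shift ->]].
  by left; exists j; split=> //; apply/shift_iff; rewrite b'r.
right; split=> // j /shift_iff; rewrite b'r => /shift_S.
exact: no_shift.
Qed.

End Extension.

Lemma starving_set_complete n (D : scs_data n) s S pos (K : {set 'I_n}) :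
  is_SCS D -> is_starvation_number D s -> execution D S pos ->
  (forall r, r \in K -> starves D S pos r) -> (s <= #|K|)%nat -> ~: S = K.
Proof.
move=> HS [_ maximal] exec K_starve sK; apply/setP => r; rewrite in_setC.
apply/idP/idP => [r_alive | /K_starve [] //]; apply: contraT => r_notin_K.
have := maximal _ _ _ (ext_execution HS exec K_starve r_alive)
                      (ext_starves HS exec K_starve r_alive).
by rewrite cardsU1 r_notin_K add1n ltnNge sK.
Qed.

Local Close Scope R_scope.

Theorem lemma3 (n : nat) (D : scs_data n) (s : nat) :
  (0 < n)%nat -> is_SCS D -> is_starvation_number D s ->
  is_resilience D s (n - s).
Proof.
move=> _ HS starv; have [[S0 [pos0 [K0 [exec0 [K0s K0_starve]]]]] maximal] := starv.
have card_removed S pos (K : {set 'I_n}) : execution D S pos -> (s <= #|K|)%nat ->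
    (forall r, r \in K -> starves D S pos r) -> #|S| = (n - #|K|)%nat.
  move=> exec sK K_starve.
  by rewrite cardsCs card_ord (starving_set_complete HS starv exec K_starve sK).
split.
- exists S0, pos0, K0; rewrite (card_removed _ _ _ exec0 _ K0_starve) K0s ?leqnn //.
- move=> S pos K exec sK K_starve; rewrite (card_removed _ _ _ exec sK K_starve).
  exact/leq_sub2l/(maximal _ _ _ exec K_starve).
Qed.
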